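(* Let $n=2$ and let $M$ be a Griffiths positive $2\times 2$ matrix of constant coefficient $(1,1)$-forms on $\mathbb{C}^2$. Then $\det(M)$ is a Hodge-Riemann form (with respect to any Kähler form $\omega$).
   Context: $V^{p,q}$ is the space of constant coefficient $(p,q)$-forms on $\mathbb{C}^n$; $V^{k,k}_{\mathbb{R}}$ is the set of real forms $\Omega=\overline{\Omega}$ in $V^{k,k}$. A $(1,1)$-form is Kähler if it equals $\sum_l\frac{\sqrt{-1}}{2}dw_l\wedge d\overline{w_l}$ in some complex linear coordinates. A matrix $M=(\alpha_{i,j})$ of $(1,1)$-forms with $\alpha_{i,j}=\overline{\alpha_{j,i}}$ is Griffiths positive if $\sum_{i,j}\theta_i\alpha_{i,j}\overline{\theta_j}$ is Kähler for all nonzero $\theta$; $\det(M)=\alpha_{1,1}\wedge\alpha_{2,2}-\alpha_{1,2}\wedge\alpha_{2,1}$. A form $\Omega\in V^{k,k}$ is a Lefschetz form for bidegree $(p,q)$ (with $p+q=n-k$) if $\alpha\mapsto\alpha\wedge\Omega$ is an isomorphism $V^{p,q}\to V^{n-q,n-p}$. Given a Kähler form $\omega$, $\Omega\in V^{k,k}_{\mathbb{R}}$ is a Hodge-Riemann form if for every $(p,q)$ with $p,q\geqslant 0$, $p+q=n-k$, there is a continuous path $\Omega_t\in V^{k,k}_{\mathbb{R}}$, $t\in[0,1]$, with $\Omega_0=\Omega$, $\Omega_1=\omega^k$, such that $\Omega_t\wedge\omega^{2r}$ is a Lefschetz form for bidegree $(p-r,q-r)$ for all $0\leqslant r\leqslant\min\{p,q\}$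 and all $t\in[0,1]$. *)

From mathcomp Require Import all_boot all_order all_algebra.
From mathcomp Require Import all_classical all_reals all_analysis.
From mathcomp Require Import complex.

Set Implicit Arguments.
Unset Strict Implicit.
Unset Printing Implicit Defensive.
Import Order.TTheory GRing.Theory Num.Theory numFieldNormedType.Exports.
Local Open Scope ring_scope.

(* The real cotangent basis is indexed by 'I_(n+n):
     index  lshift n i  (value i)      stands for dz_i       (i < n),
     index  rshift n i  (value n + i)  stands for dz̄_i.
   A form is the function K |-> coefficient of e_K, where for
   K = {k_1 < ... < k_m}, e_K = e_{k_1} /\ ... /\ e_{k_m}. *)

Section Forms.
Variables (R : realType) (n : nat).

Definition cform := {ffun {set 'I_(n+n)} -> R[i]}.

(* sign of reordering e_I /\ e_J (I, J disjoint) into e_(I :|: J) *)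
Definition wsign (I J : {set 'I_(n+n)}) : R[i] :=
  (-1) ^+ #|[set x : 'I_(n+n) * 'I_(n+n) |
              [&& x.1 \in I, x.2 \in J & (x.2 < x.1)%N]]|.

Definition wedge (a b : cform) : cform :=
  [ffun K => \sum_(I : {set 'I_(n+n)}) \sum_(J : {set 'I_(n+n)})
     if (I :&: J == finset.set0) && (I :|: J == K) then wsign I J * a I * b J else 0].

Definition one_form : cform := [ffun K => (K == finset.set0)%:R].

Definition wpow (a : cform) (k : nat) : cform := iter k (wedge a) one_form.

(* complex conjugation on indices: dz_i <-> dz̄_i *)
Definition conj_idx (i : 'I_(n+n)) : 'I_(n+n) :=
  insubd i (if (i < n)%N then (i + n)%N else (i - n)%N).

(* sign of reordering e_{σ k_1} /\ ... /\ e_{σ k_m} into e_{σ(K)} *)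
Definition csign (I : {set 'I_(n+n)}) : R[i] :=
  (-1) ^+ #|[set x : 'I_(n+n) * 'I_(n+n) |
              [&& x.1 \in I, x.2 \in I, (x.1 < x.2)%N &
                  (conj_idx x.2 < conj_idx x.1)%N]]|.

Definition conjf (a : cform) : cform :=
  [ffun K => \sum_(I : {set 'I_(n+n)})
     if conj_idx @: I == K then csign I * conjc (a I) else 0].

Definition holo_idx : {set 'I_(n+n)} := [set i : 'I_(n+n) | (i < n)%N].
Definition anti_idx : {set 'I_(n+n)} := ~: holo_idx.

Definition isPQ (p q : nat) (a : cform) : Prop :=
  forall I : {set 'I_(n+n)}, a I != 0 ->
    #|I :&: holo_idx| = p /\ #|I :&: anti_idx| = q.

Definition real_form (a : cform) : Prop := conjf a = a.

Definition dz (i : 'I_n) : cform := [ffun K => (K == [set lshift n i])%:R].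
Definition dzbar (i : 'I_n) : cform := [ffun K => (K == [set rshift n i])%:R].

(* dw_l for the complex linear coordinates w = A z *)
Definition dw (A : 'M[R[i]]_n) (l : 'I_n) : cform := \sum_(j < n) A l j *: dz j.

Definition Kahler (w : cform) : Prop :=
  exists A : 'M[R[i]]_n, A \in unitmx /\
    w = \sum_(l < n) ('i / 2) *: wedge (dw A l) (conjf (dw A l)).

Definition Griffiths_positive (m : nat) (M : 'I_m -> 'I_m -> cform) : Prop :=
  forall theta : 'I_m -> R[i], (exists i, theta i != 0) ->
    Kahler (\sum_(i < m) \sum_(j < m) (theta i * conjc (theta j)) *: M i j).

Definition det2 (M : 'I_2 -> 'I_2 -> cform) : cform :=
  wedge (M 0 0) (M 1 1) - wedge (M 0 1) (M 1 0).

Definition Lefschetz (p q : nat) (Om : cform) : Prop :=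
  [/\ forall a, isPQ p q a -> isPQ (n - q) (n - p) (wedge a Om),
      forall a, isPQ p q a -> wedge a Om = 0 -> a = 0 &
      forall b, isPQ (n - q) (n - p) b -> exists a, isPQ p q a /\ wedge a Om = b].

Definition path_continuous (P : R -> cform) : Prop :=
  forall K : {set 'I_(n+n)},
    ({within [set t : R | (0 <= t <= 1)%R], continuous (fun t : R => complex.Re (P t K))})%classic /\
    ({within [set t : R | (0 <= t <= 1)%R], continuous (fun t : R => complex.Im (P t K))})%classic.

Definition Hodge_Riemann (k : nat) (w Om : cform) : Prop :=
  [/\ isPQ k k Om, real_form Om &
   forall p q : nat, (p + q = n - k)%N ->
     exists P : R -> cform,
       [/\ P 0 = Om, P 1 = wpow w k, path_continuous P,
           forall t : R, 0 <= t <= 1 -> isPQ k k (P t) /\ real_form (P t) &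
           forall t : R, 0 <= t <= 1 -> forall r : nat, (r <= minn p q)%N ->
             Lefschetz (p - r) (q - r) (wedge (P t) (wpow w (2 * r)))]].

End Forms.

From Pilot Require Import Defs.
From mathcomp Require Import all_boot all_order all_algebra.
From mathcomp Require Import all_classical all_reals all_analysis.
From mathcomp Require Import complex ring lra zify.
Import Order.TTheory GRing.Theory Num.Theory numFieldNormedType.Exports.
Local Open Scope ring_scope.

Set Implicit Arguments.
Unset Strict Implicit.
Unset Printing Implicit Defensive.

(* For n = k = 2 the only bidegree is (p, q) = (0, 0), and a (2,2)-form is a
   Lefschetz form for it exactly when its top coefficient is nonzero.  So it
   suffices that the top coefficients of det M and of w /\ w are positive reals:
   the segment from det M to w /\ w then consists of such forms.
   Writing M_ij = i/2 sum_ab N_ijab dz_a /\ dzbar_b, the top coefficient of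
   det M is a quarter of the mixed determinant T(N).  Griffiths positivity makes
   every contraction H(x)_ij = sum_ab x_a conj(x_b) N_ijab a positive definite
   Hermitian 2x2 matrix, and a polynomial identity writes N_0000^2 T(N) as the
   mixed discriminant of H(e_0) and H(N_0010, -N_0000) plus two squared moduli.
   Mixed discriminants of positive definite Hermitian 2x2 matrices are positive
   by Cauchy-Schwarz and AM-GM. *)

Lemma sum_ord2 (V : nmodType) (F : 'I_2 -> V) : \sum_(i < 2) F i = F 0 + F 1.
Proof. by rewrite !big_ord_recl big_ord0 addr0; congr (F _ + F _); apply: val_inj. Qed.

Lemma lt_addr_of_sqr_lt_mul (R : realFieldType) (X Y k : R) :
  0 < X -> 0 < Y -> k ^+ 2 < X * Y -> 2 * k < X + Y.
Proof.
move=> X0 Y0 kXY; have XY0 : 0 < X + Y by apply: addr_gt0.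
rewrite ltNge; apply/negP => hk.
have := sqr_ge0 (X - Y); nra.
Qed.

Section Hermitian2.
Variable R : rcfType.
Local Notation C := R[i].

Lemma complex_gt0E (x : C) : 0 < x -> x = (complex.Re x)%:C%C /\ 0 < complex.Re x.
Proof. by case: x => a b; rewrite ltcE /= => /andP[/eqP -> ->]. Qed.

Definition posdef2 (H : 'I_2 -> 'I_2 -> C) :=
  [/\ 0 < H 0 0, 0 < H 1 1 & 0 < H 0 0 * H 1 1 - H 0 1 * H 1 0].

(* The coefficient of [s t] in [det (s H + t K)]. *)
Definition mixed_disc2 (H K : 'I_2 -> 'I_2 -> C) :=
  H 0 0 * K 1 1 + K 0 0 * H 1 1 - (H 0 1 * K 1 0 + H 1 0 * K 0 1).

Lemma mixed_disc2_gt0_real (d b a e p q r s : R) : 0 < d -> 0 < b -> 0 < a -> 0 < e ->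
  p ^+ 2 + q ^+ 2 < d * b -> r ^+ 2 + s ^+ 2 < a * e -> 2 * (p * r + q * s) < d * e + a * b.
Proof.
move=> d0 b0 a0 e0 hpq hrs; apply: lt_addr_of_sqr_lt_mul; rewrite ?mulr_gt0 //.
have cauchy_schwarz : (p * r + q * s) ^+ 2 <= (p ^+ 2 + q ^+ 2) * (r ^+ 2 + s ^+ 2).
  by rewrite -subr_ge0 (_ : _ - _ = (p * s - q * r) ^+ 2) ?sqr_ge0 //; ring.
apply: (le_lt_trans cauchy_schwarz); rewrite (_ : d * e * (a * b) = d * b * (a * e)); last by ring.
by apply: ltr_pM; rewrite ?addr_ge0 ?sqr_ge0.
Qed.

Lemma mixed_disc2_gt0_complex (d b a e c g : C) : 0 < d -> 0 < b -> 0 < a -> 0 < e ->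
  0 < d * b - c * conjc c -> 0 < a * e - g * conjc g ->
  0 < d * e + a * b - (c * conjc g + conjc c * g).
Proof.
move=> /complex_gt0E[-> d0] /complex_gt0E[-> b0] /complex_gt0E[-> a0] /complex_gt0E[-> e0].
case: c => p q; case: g => r s; rewrite !ltcE /= => /andP[_ hpq] /andP[_ hrs].
apply/andP; split; first by apply/eqP; ring.
rewrite (_ : _ - _ = complex.Re d * complex.Re e + complex.Re a * complex.Re b
  - 2 * (p * r + q * s)); last by ring.
by rewrite subr_gt0; apply: mixed_disc2_gt0_real => //; nra.
Qed.

Lemma mixed_disc2_gt0 (H K : 'I_2 -> 'I_2 -> C) :
  H 1 0 = conjc (H 0 1) -> K 1 0 = conjc (K 0 1) ->
  posdef2 H -> posdef2 K -> 0 < mixed_disc2 H K.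
Proof.
rewrite /posdef2 /mixed_disc2 => -> -> [d0 b0 hH] [a0 e0 hK].
exact: mixed_disc2_gt0_complex.
Qed.

Lemma posdef2_quad (H : 'I_2 -> 'I_2 -> C) : H 1 0 = conjc (H 0 1) ->
  (forall th, (exists i, th i != 0) -> 0 < \sum_(i < 2) \sum_(j < 2) th i * conjc (th j) * H i j) ->
  posdef2 H.
Proof.
move=> H10E H_pos.
have quad2 s t : s != 0 \/ t != 0 -> 0 < s * conjc s * H 0 0 + s * conjc t * H 0 1
    + t * conjc s * H 1 0 + t * conjc t * H 1 1.
  move=> st_neq0; have := H_pos (fun i => if i == 0 then s else t).
  by rewrite !sum_ord2 /= addrA; apply; case: st_neq0; [exists 0 | exists 1].
have H00_gt0 : 0 < H 0 0.
  by move: (quad2 1 0 (or_introl (oner_neq0 _))); rewrite rmorph0 rmorph1; congr (_ < _); ring.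
have H00E : conjc (H 0 0) = H 0 0.
  by have [-> _] := complex_gt0E H00_gt0; rewrite conjc_real.
split => //.
  by move: (quad2 0 1 (or_intror (oner_neq0 _))); rewrite rmorph0 rmorph1; congr (_ < _); ring.
(* At [theta = (- conj (H 0 1), H 0 0)] the form equals [H 0 0 * det H]. *)
rewrite -(pmulr_rgt0 _ H00_gt0).
move: (quad2 (- conjc (H 0 1)) (H 0 0) (or_intror (lt0r_neq0 H00_gt0))).
by rewrite rmorphN /= conjcK H00E H10E; congr (_ < _); ring.
Qed.

End Hermitian2.

Section GriffithsPositiveTensor.
Variable R : rcfType.
Local Notation C := R[i].
Variable N : 'I_2 -> 'I_2 -> 'I_2 -> 'I_2 -> C.
Hypothesis N_herm : forall i j a b, N i j a b = conjc (N j i b a).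

Definition hmx (x : 'I_2 -> C) (i j : 'I_2) : C :=
  \sum_(a < 2) \sum_(b < 2) x a * conjc (x b) * N i j a b.

Hypothesis N_pos : forall th x : 'I_2 -> C, (exists i, th i != 0) -> (exists a, x a != 0) ->
  0 < \sum_(i < 2) \sum_(j < 2) th i * conjc (th j) * hmx x i j.

Definition mixed_det : C := mixed_disc2 (N 0 0) (N 1 1) - mixed_disc2 (N 0 1) (N 1 0).

Definition vec2 (s t : C) : 'I_2 -> C := fun i => if i == 0 then s else t.

Lemma hmx_conj x i j : conjc (hmx x i j) = hmx x j i.
Proof. by rewrite /hmx !sum_ord2 !rmorphD !rmorphM /= !conjcK -!N_herm; ring. Qed.

Lemma hmx_vec2 u v i j : hmx (vec2 u v) i j = u * conjc u * N i j 0 0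
  + u * conjc v * N i j 0 1 + v * conjc u * N i j 1 0 + v * conjc v * N i j 1 1.
Proof. by rewrite /hmx !sum_ord2 /vec2 /=; ring. Qed.

Lemma hmx_e0 i j : hmx (vec2 1 0) i j = N i j 0 0.
Proof. by rewrite hmx_vec2 rmorph0 rmorph1; ring. Qed.

Lemma hmx_posdef x : (exists a, x a != 0) -> posdef2 (hmx x).
Proof. by move=> x_neq0; apply: posdef2_quad => [|th th_neq0]; rewrite ?hmx_conj ?N_pos. Qed.

Lemma mixed_det_identity : let d := N 0 0 0 0 in let u := N 0 0 1 0 in
  d ^+ 2 * mixed_det = mixed_disc2 (hmx (vec2 1 0)) (hmx (vec2 u (- d)))
    + (conjc u * N 0 1 0 0 - d * N 0 1 0 1) * conjc (conjc u * N 0 1 0 0 - d * N 0 1 0 1)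
    + (u * N 0 1 0 0 - d * N 0 1 1 0) * conjc (u * N 0 1 0 0 - d * N 0 1 1 0).
Proof.
move=> d u; rewrite /mixed_det /mixed_disc2 !hmx_e0 !hmx_vec2 /d /u.
by rewrite !rmorphB !rmorphM !rmorphN /= !conjcK -!N_herm; ring.
Qed.

Lemma mixed_det_gt0 : 0 < mixed_det.
Proof.
have posdef_e0 : posdef2 (hmx (vec2 1 0)) by apply: hmx_posdef; exists 0; apply: oner_neq0.
have d_gt0 : 0 < N 0 0 0 0 by case: posdef_e0; rewrite hmx_e0.
have posdef_u : posdef2 (hmx (vec2 (N 0 0 1 0) (- N 0 0 0 0))).
  by apply: hmx_posdef; exists 1; rewrite /vec2 /= oppr_eq0 lt0r_neq0.
rewrite -(pmulr_rgt0 _ (exprn_gt0 2 d_gt0)) mixed_det_identity.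
rewrite ltr_wpDr ?mulcJ_ge0 // ltr_wpDr ?mulcJ_ge0 //.
by apply: mixed_disc2_gt0; rewrite ?hmx_conj.
Qed.

End GriffithsPositiveTensor.

Section FfunArith.
Variable aT : finType.

Lemma ffunDE (V : nmodType) (f g : {ffun aT -> V}) x : (f + g) x = f x + g x.
Proof. by rewrite ffunE. Qed.

Lemma ffunNE (V : zmodType) (f : {ffun aT -> V}) x : (- f) x = - f x.
Proof. by rewrite ffunE. Qed.

End FfunArith.

Lemma sumr_neq0_exists (I : finType) (V : nmodType) (F : I -> V) :
  \sum_i F i != 0 -> exists i, F i != 0.
Proof.
case: (pickP (fun i => F i != 0)) => [i Fi _ | F0]; first by exists i.
by rewrite big1 ?eqxx // => i _; apply/eqP; rewrite -[_ == _]negbK F0.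
Qed.

Lemma card_pairs (T : finType) (P : pred (T * T)) :
  #|[set x | P x]| = (\sum_i \sum_j P (i, j))%N.
Proof.
rewrite -sum1dep_card big_mkcond [RHS]pair_bigA /=.
by apply: eq_bigr => -[i j] _; case: (P _).
Qed.

Section Forms.
Variables (R : realType) (n : nat).
Local Notation cf := (cform R n).
Local Notation idx := 'I_(n + n).
Local Notation conj_idx := (@conj_idx n).

Lemma val_conj_idx (i : idx) : val (conj_idx i) = if (i < n)%N then (i + n)%N else (i - n)%N.
Proof.
have lt_nn : ((if (i < n)%N then (i + n)%N else (i - n)%N) < n + n)%N.
  by case: (ltnP i n) => hi; [rewrite ltn_add2r | rewrite (leq_ltn_trans (leq_subr _ _))].
by rewrite /Defs.conj_idx val_insubd lt_nn.
Qed.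

Lemma conj_idxK : involutive conj_idx.
Proof.
move=> i; apply: val_inj; rewrite !val_conj_idx; case: (ltnP i n) => hi.
  by rewrite ltnNge leq_addl /= addnK.
by rewrite ltn_subLR // ltn_ord subnK.
Qed.

Lemma conj_lshift (x : 'I_n) : conj_idx (lshift n x) = rshift n x.
Proof. by apply: val_inj; rewrite val_conj_idx /= ltn_ord addnC. Qed.

Lemma conj_rshift (x : 'I_n) : conj_idx (rshift n x) = lshift n x.
Proof. by rewrite -conj_lshift conj_idxK. Qed.

Lemma conj_imsetK (K : {set idx}) : conj_idx @: (conj_idx @: K) = K.
Proof. by rewrite -imset_comp (eq_imset _ conj_idxK) imset_id. Qed.

Lemma conj_imsetT : conj_idx @: [set: idx] = [set: idx].
Proof.
by apply/setP => k; rewrite inE; apply/imsetP; exists (conj_idx k); rewrite ?conj_idxK.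
Qed.

Lemma conjfE (a : cf) K : conjf a K = csign R (conj_idx @: K) * conjc (a (conj_idx @: K)).
Proof.
rewrite ffunE (bigD1 (conj_idx @: K)) //= conj_imsetK eqxx big1 ?addr0 //.
move=> I hI; case: eqP => // hK.
by move: hI; rewrite -hK conj_imsetK eqxx.
Qed.

Lemma cformZE c (a : cf) K : (c *: a) K = c * a K.
Proof. by rewrite ffunE. Qed.

Lemma isPQ0 p q : isPQ p q (0 : cf).
Proof. by move=> K; rewrite ffunE eqxx. Qed.

Lemma isPQ_add p q (a b : cf) : isPQ p q a -> isPQ p q b -> isPQ p q (a + b).
Proof.
move=> ha hb K; rewrite ffunDE.
by have [-> | /ha //] := eqVneq (a K) 0; rewrite add0r => /hb.
Qed.

Lemma isPQ_scale p q c (a : cf) : isPQ p q a -> isPQ p q (c *: a).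
Proof. by move=> ha K; rewrite cformZE mulf_eq0 negb_or => /andP[_ /ha]. Qed.

Lemma isPQ_sub p q (a b : cf) : isPQ p q a -> isPQ p q b -> isPQ p q (a - b).
Proof. by move=> ha hb; rewrite -scaleN1r; apply/isPQ_add/isPQ_scale. Qed.

Lemma isPQ_sum p q (I : finType) (F : I -> cf) :
  (forall i, isPQ p q (F i)) -> isPQ p q (\sum_i F i).
Proof. by move=> hF; apply: big_ind => //; [apply: isPQ0 | apply: isPQ_add]. Qed.

Lemma isPQ_wedge p q p' q' (a b : cf) : isPQ p q a -> isPQ p' q' b ->
  isPQ (p + p') (q + q') (wedge a b).
Proof.
move=> ha hb K; rewrite ffunE => /sumr_neq0_exists[I /sumr_neq0_exists[J]].
case: ifP => [/andP[/eqP IJ0 /eqP <-] | _]; last by rewrite eqxx.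
rewrite !mulf_eq0 !negb_or => /andP[/andP[_ /ha[hIp hIq]] /hb[hJp hJq]].
have disj (H : {set idx}) : (I :&: H) :&: (J :&: H) = finset.set0.
  by rewrite finset.setIACA IJ0 finset.set0I.
by rewrite !finset.setIUl !cardsU !disj cards0 !subn0 hIp hIq hJp hJq.
Qed.

Lemma isPQ_one : isPQ 0 0 (one_form R n).
Proof.
move=> K; rewrite ffunE pnatr_eq0 eqb0 negbK => /eqP ->.
by rewrite !finset.set0I cards0.
Qed.

Lemma isPQ00_eq0 (a : cf) K : isPQ 0 0 a -> K != finset.set0 -> a K = 0.
Proof.
move=> ha; apply: contraNeq => /ha[h1 h2]; rewrite -cards_eq0.
by rewrite -(cardsID (holo_idx n) K) finset.setDE h1 -/(anti_idx n) h2.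
Qed.

Lemma isPQnn_eq0 (a : cf) K : isPQ n n a -> K != [set: idx] -> a K = 0.
Proof.
move=> ha; apply: contraNeq => /ha[h1 h2].
rewrite eqEcard finset.subsetT finset.cardsT card_ord /=.
by rewrite -(cardsID (holo_idx n) K) finset.setDE h1 -/(anti_idx n) h2.
Qed.

Lemma wsign0r (I : {set idx}) : wsign R I finset.set0 = 1.
Proof.
rewrite /wsign (_ : [set x | _] = finset.set0) ?cards0 //.
by apply/setP => x; rewrite !inE /= andbF.
Qed.

Lemma wsign0l (J : {set idx}) : wsign R finset.set0 J = 1.
Proof.
rewrite /wsign (_ : [set x | _] = finset.set0) ?cards0 //.
by apply/setP => x; rewrite !inE.
Qed.

Lemma wedge1r (a : cf) : wedge a (one_form R n) = a.
Proof.
apply/ffunP => K; rewrite ffunE (bigD1 K) //= (bigD1 finset.set0) //=.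
rewrite finset.setI0 finset.setU0 !eqxx /= ffunE eqxx wsign0r mul1r mulr1.
rewrite big1 ?addr0 => [|J J0]; last by rewrite ffunE (negbTE J0) mulr0; case: ifP.
rewrite big1 ?addr0 // => I IK; apply: big1 => J _; case: ifP => // /andP[_ /eqP IJK].
rewrite ffunE; case: eqP => [J0 | _]; last by rewrite mulr0.
by move: IK; rewrite -IJK J0 finset.setU0 eqxx.
Qed.

Lemma wedge_scalarl (a b : cf) : isPQ 0 0 a -> wedge a b = a finset.set0 *: b.
Proof.
move=> ha; apply/ffunP => K; rewrite ffunE cformZE (bigD1 finset.set0) //= (bigD1 K) //=.
rewrite finset.set0I finset.set0U !eqxx /= wsign0l mul1r.
rewrite big1 ?addr0 => [|J JK]; last by rewrite finset.set0U (negbTE JK) andbF.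
rewrite big1 ?addr0 // => I I0; apply: big1 => J _.
by rewrite (isPQ00_eq0 ha I0) mulr0 mul0r if_same.
Qed.

Lemma Lefschetz_top (Om : cf) : isPQ n n Om -> Om [set: idx] != 0 -> Lefschetz 0 0 Om.
Proof.
move=> hOm OmT; rewrite /Lefschetz !subn0; split.
- by move=> a ha; rewrite wedge_scalarl //; apply: isPQ_scale.
- move=> a ha; rewrite wedge_scalarl // => /ffunP/(_ [set: idx]).
  rewrite cformZE ffunE => /eqP; rewrite mulf_eq0 (negbTE OmT) orbF => /eqP a0.
  apply/ffunP => K; rewrite ffunE.
  by have [->|K0] := eqVneq K finset.set0; rewrite ?a0 ?(isPQ00_eq0 ha K0).
- move=> b hb; exists ((b [set: idx] / Om [set: idx]) *: one_form R n).
  split; first exact/isPQ_scale/isPQ_one.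
  rewrite wedge_scalarl; last exact/isPQ_scale/isPQ_one.
  apply/ffunP => K; rewrite !cformZE ffunE eqxx mulr1.
  have [->|KT] := eqVneq K [set: idx]; first by rewrite divfK.
  by rewrite (isPQnn_eq0 hOm KT) (isPQnn_eq0 hb KT) mulr0.
Qed.

Lemma wedge_top (a b : cf) :
  wedge a b [set: idx] = \sum_I wsign R I (~: I) * a I * b (~: I).
Proof.
rewrite ffunE; apply: eq_bigr => I _.
rewrite (bigD1 (~: I)) //= finset.setICr finset.setUCr !eqxx /= big1 ?addr0 // => J JI.
case: ifP => // /andP[/eqP I0 /eqP IT]; move: JI; apply: contraNeq => _.
apply/eqP/setP => k; move/setP: I0 => /(_ k); move/setP: IT => /(_ k); rewrite !inE.
by case: (k \in I); case: (k \in J).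
Qed.

End Forms.

Section Bidegree11.
Variables (R : realType) (n : nat).
Local Notation cf := (cform R n).
Local Notation idx := 'I_(n + n).
Local Notation conj_idx := (@conj_idx n).

Definition bidx (x y : 'I_n) : {set idx} := [set lshift n x; rshift n y].

Lemma bidx_inj x y x' y' : bidx x y = bidx x' y' -> x = x' /\ y = y'.
Proof.
move=> eq_bidx; split.
  have : lshift n x \in bidx x' y' by rewrite -eq_bidx !inE eqxx.
  by rewrite !inE eq_lrshift orbF => /eqP/lshift_inj.
have : rshift n y \in bidx x' y' by rewrite -eq_bidx !inE eqxx orbT.
by rewrite !inE eq_rlshift => /eqP/rshift_inj.
Qed.

Lemma isPQ11_support (a : cf) K : isPQ 1 1 a -> a K != 0 -> exists x y, K = bidx x y.
Proof.
move=> ha /ha[/eqP/cards1P[u Ku] /eqP/cards1P[v Kv]].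
have u_holo : u \in holo_idx n by have := finset.set11 u; rewrite -Ku inE => /andP[].
have v_anti : v \in anti_idx n by have := finset.set11 v; rewrite -Kv inE => /andP[].
have -> : K = [set u; v].
  by rewrite -Ku -Kv -finset.setIUr /anti_idx finset.setUCr finset.setIT.
move: u_holo v_anti; rewrite /anti_idx /holo_idx !inE.
case: (splitP u) => [x ux | x ux] //; case: (splitP v) => [y vy | y vy] // _ _.
by exists x, y; congr [set _; _]; apply: val_inj.
Qed.

Lemma sum_bidx (G : {set idx} -> R[i]) :
  (forall I, G I != 0 -> exists x y, I = bidx x y) ->
  \sum_I G I = \sum_x \sum_y G (bidx x y).
Proof.
move=> G_supp; rewrite (bigID (mem [set bidx p.1 p.2 | p : 'I_n * 'I_n])) /=.
rewrite [X in _ + X]big1 ?addr0 => [|I]; last first.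
  by apply: contraNeq => /G_supp[x [y ->]]; apply/imsetP; exists (x, y).
rewrite big_imset /=; last by move=> [x y] [x' y'] _ _ /= /bidx_inj[-> ->].
by rewrite pair_bigA; apply: eq_bigl.
Qed.

Lemma conj_bidx x y : conj_idx @: bidx x y = bidx y x.
Proof. by rewrite imsetU !imset_set1 conj_lshift conj_rshift finset.setUC. Qed.

Lemma csign1 (i : idx) : csign R [set i] = 1.
Proof.
rewrite /csign (_ : [set _ | _] = finset.set0) ?cards0 //.
by apply/setP => -[u v]; rewrite !inE /=; case: eqP => // ->; case: eqP => // ->; rewrite ltnn.
Qed.

Lemma csign_bidx x y : csign R (bidx x y) = -1.
Proof.
rewrite /csign (_ : [set _ | _] = [set (lshift n x, rshift n y)]) ?cards1 ?expr1 //.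
have x_lt := ltn_ord x; have y_lt := ltn_ord y.
apply/setP => -[u v]; rewrite !inE /= xpair_eqE.
apply/idP/idP => [/and4P[/orP[]/eqP-> /orP[]/eqP->] | /andP[/eqP-> /eqP->]];
  rewrite ?conj_lshift ?conj_rshift ?eqxx //= ?orbT; lia.
Qed.

Lemma wsign_lrshift x y : wsign R [set lshift n x] [set rshift n y] = 1.
Proof.
rewrite /wsign (_ : [set _ | _] = finset.set0) ?cards0 //.
have x_lt := ltn_ord x.
by apply/setP => -[u v]; rewrite !inE /=; case: eqP => // ->; case: eqP => // -> /=; lia.
Qed.

Lemma isPQ10_lshift (a : cf) :
  (forall K, a K != 0 -> exists j, K = [set lshift n j]) -> isPQ 1 0 a.
Proof.
move=> a_supp K /a_supp[j ->]; rewrite (finset.setIidPl _) ?cards1; last first.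
  by rewrite finset.sub1set inE /= ltn_ord.
rewrite (_ : _ :&: _ = finset.set0) ?cards0 //.
by apply/setP => k; rewrite !inE; case: eqP => // ->; rewrite /= ltn_ord.
Qed.

Lemma isPQ01_rshift (a : cf) :
  (forall K, a K != 0 -> exists j, K = [set rshift n j]) -> isPQ 0 1 a.
Proof.
move=> a_supp K /a_supp[j ->]; split.
  rewrite (_ : _ :&: _ = finset.set0) ?cards0 //.
  by apply/setP => k; rewrite !inE; case: eqP => // ->; rewrite /= ltnNge leq_addr.
by rewrite (finset.setIidPl _) ?cards1 // finset.sub1set !inE /= ltnNge leq_addr.
Qed.

Lemma wedge_lrshift_bidx (a b : cf) x y :
  (forall K, a K != 0 -> exists j, K = [set lshift n j]) ->
  (forall K, b K != 0 -> exists j, K = [set rshift n j]) ->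
  wedge a b (bidx x y) = a [set lshift n x] * b [set rshift n y].
Proof.
move=> a_supp b_supp; rewrite ffunE (bigD1 [set lshift n x]) //= (bigD1 [set rshift n y]) //=.
have -> : [set lshift n x] :&: [set rshift n y] == finset.set0.
  apply/eqP/setP => k; rewrite !inE; case: (k =P lshift n x) => // ->.
  by rewrite eq_lrshift.
rewrite eqxx wsign_lrshift mul1r big1 ?addr0 => [|J Jy]; last first.
  case: ifP => // /andP[_ /eqP IJ]; have [-> | /b_supp[j Jj]] := eqVneq (b J) 0.
    by rewrite mulr0.
  by move: IJ Jy; rewrite Jj => /bidx_inj[_ ->]; rewrite eqxx.
rewrite big1 ?addr0 // => I Ix; apply: big1 => J _; case: ifP => // /andP[_ /eqP IJ].
have [-> | /a_supp[i Ii]] := eqVneq (a I) 0; first by rewrite mulr0 mul0r.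
have [-> | /b_supp[j Jj]] := eqVneq (b J) 0; first by rewrite mulr0.
by move: IJ Ix; rewrite Ii Jj => /bidx_inj[-> _]; rewrite eqxx.
Qed.

Section Kahler.
Variable A : 'M[R[i]]_n.

Lemma dwE l K : dw A l K = \sum_j A l j * (K == [set lshift n j])%:R.
Proof. by rewrite sum_ffunE; apply: eq_bigr => j _; rewrite cformZE ffunE. Qed.

Lemma dw_support l K : dw A l K != 0 -> exists j, K = [set lshift n j].
Proof.
rewrite dwE => /sumr_neq0_exists[j]; case: (K =P [set lshift n j]) => [-> | _]; first by exists j.
by rewrite mulr0 eqxx.
Qed.

Lemma dw_lshift l x : dw A l [set lshift n x] = A l x.
Proof.
rewrite dwE (bigD1 x) //= eqxx mulr1 big1 ?addr0 // => j jx.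
case: eqP => [/set1_inj/lshift_inj xj | _]; last by rewrite mulr0.
by rewrite xj eqxx in jx.
Qed.

Lemma conj_dw_support l K : conjf (dw A l) K != 0 -> exists j, K = [set rshift n j].
Proof.
rewrite conjfE mulf_eq0 negb_or conjc_eq0 => /andP[_ /dw_support[j Kj]].
by exists j; rewrite -(conj_imsetK K) Kj imset_set1 conj_lshift.
Qed.

Lemma conj_dw_rshift l y : conjf (dw A l) [set rshift n y] = conjc (A l y).
Proof. by rewrite conjfE imset_set1 conj_rshift csign1 dw_lshift mul1r. Qed.

Lemma Kahler_formE x y :
  (\sum_l ('i / 2) *: wedge (dw A l) (conjf (dw A l))) (bidx x y)
  = ('i / 2) * \sum_l A l x * conjc (A l y).
Proof.
rewrite sum_ffunE mulr_sumr; apply: eq_bigr => l _.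
by rewrite cformZE wedge_lrshift_bidx ?dw_lshift ?conj_dw_rshift //;
  [apply: dw_support | apply: conj_dw_support].
Qed.

End Kahler.

Lemma Kahler_isPQ11 (w : cf) : Kahler w -> isPQ 1 1 w.
Proof.
case=> A [_ ->]; apply: isPQ_sum => l; apply: isPQ_scale.
exact: (isPQ_wedge (isPQ10_lshift (@dw_support A l)) (isPQ01_rshift (@conj_dw_support A l))).
Qed.

Lemma i_half_inv : (-2 * 'i) * ('i / 2) = 1 :> R[i].
Proof.
rewrite (_ : _ * _ = - ('i ^+ 2) * (2 / 2)); last by ring.
by rewrite sqrCi opprK mul1r divff // pnatr_eq0.
Qed.

(* The normalisation [a = 'i / 2 * \sum_(x, y) hcoef a x y dz_x /\ dzbar_y]. *)
Definition hcoef (a : cf) (x y : 'I_n) : R[i] := (-2 * 'i) * a (bidx x y).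

Lemma hcoef_lincomb (I J : finType) (c : I -> J -> R[i]) (F : I -> J -> cf) x y :
  hcoef (\sum_i \sum_j c i j *: F i j) x y = \sum_i \sum_j c i j * hcoef (F i j) x y.
Proof.
rewrite /hcoef sum_ffunE mulr_sumr; apply: eq_bigr => i _.
by rewrite sum_ffunE mulr_sumr; apply: eq_bigr => j _; rewrite cformZE mulrCA.
Qed.

Lemma Kahler_hcoef (w : cf) : Kahler w ->
  exists2 A : 'M[R[i]]_n, A \in unitmx & forall x y, hcoef w x y = \sum_l A l x * conjc (A l y).
Proof.
case=> A [A_unit ->]; exists A => // x y.
by rewrite /hcoef Kahler_formE mulrA i_half_inv mul1r.
Qed.

Lemma Kahler_hcoef_conj (w : cf) x y : Kahler w -> hcoef w y x = conjc (hcoef w x y).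
Proof.
case/Kahler_hcoef => A _ wE; rewrite !wE rmorph_sum; apply: eq_bigr => l _.
by rewrite rmorphM /= conjcK mulrC.
Qed.

Lemma Kahler_quad_gt0 (w : cf) (x : 'I_n -> R[i]) : Kahler w -> (exists a, x a != 0) ->
  0 < \sum_a \sum_b x a * conjc (x b) * hcoef w a b.
Proof.
case/Kahler_hcoef => A A_unit wE x_neq0; pose y := A *m \col_a x a.
have yE l : y l 0 = \sum_a A l a * x a by rewrite !mxE; apply: eq_bigr => a _; rewrite mxE.
have -> : \sum_a \sum_b x a * conjc (x b) * hcoef w a b = \sum_l y l 0 * conjc (y l 0).
  under [RHS]eq_bigr => l _ do rewrite yE rmorph_sum mulr_suml.
  rewrite [RHS]exchange_big; apply: eq_bigr => a _.
  under [RHS]eq_bigr => l _ do rewrite mulr_sumr.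
  rewrite [RHS]exchange_big; apply: eq_bigr => b _.
  by rewrite wE mulr_sumr; apply: eq_bigr => l _; rewrite rmorphM; ring.
have [l yl] : exists l, y l 0 != 0.
  apply/existsP; apply: contraT; rewrite negb_exists => /forallP y0.
  have : \col_a x a = 0.
    rewrite -(mulKmx A_unit (\col_a x a)) -/y (_ : y = 0) ?mulmx0 //.
    by apply/matrixP => i j; rewrite [RHS]mxE (ord1 j); apply/eqP/negbNE/y0.
  move/matrixP => col0; case: x_neq0 => a.
  by have := col0 a 0; rewrite !mxE => ->; rewrite eqxx.
rewrite (bigD1 l) //= ltr_wpDr ?sumr_ge0 // => [k _|]; first exact: mulcJ_ge0.
by rewrite lt_def mulf_neq0 ?conjc_eq0 // mulcJ_ge0.
Qed.

End Bidegree11.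

Section Dim2.
Variable R : realType.
Local Notation cf := (cform R 2).
Local Notation idx := 'I_(2 + 2).

Lemma setC_bidx (x y : 'I_2) : ~: bidx x y = bidx (rev_ord x) (rev_ord y).
Proof.
by apply/setP => k; case: x => [[|[|//]] ?]; case: y => [[|[|//]] ?];
  case: k => [[|[|[|[|//]]]] ?]; rewrite !inE.
Qed.

Lemma wsign_bidx_setC (x y : 'I_2) :
  wsign R (bidx x y) (~: bidx x y) = if x == y then -1 else 1.
Proof.
by rewrite setC_bidx; case: x => [[|[|//]] ?]; case: y => [[|[|//]] ?];
  rewrite /wsign card_pairs !big_ord_recl !big_ord0 !inE /= -signr_odd /= ?expr0 ?expr1.
Qed.

Lemma rev_ord2 : rev_ord (0 : 'I_2) = 1 /\ rev_ord (1 : 'I_2) = 0.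
Proof. by split; apply: val_inj. Qed.

Lemma mixed_disc2_hcoef (a b : cf) : mixed_disc2 (hcoef a) (hcoef b)
  = - 4 * mixed_disc2 (fun x y => a (bidx x y)) (fun x y => b (bidx x y)).
Proof.
rewrite (_ : -4 = (-2 * 'i) ^+ 2) /mixed_disc2 /hcoef; first ring.
by rewrite exprMn sqrCi; ring.
Qed.

Lemma wedge11_top (a b : cf) : isPQ 1 1 a -> isPQ 1 1 b ->
  wedge a b [set: idx] = mixed_disc2 (hcoef a) (hcoef b) / 4.
Proof.
move=> ha hb; rewrite wedge_top sum_bidx => [|I]; last first.
  by rewrite !mulf_eq0 !negb_or => /andP[/andP[_ /(isPQ11_support ha)]].
have [rev0 rev1] := rev_ord2.
rewrite !sum_ord2 !wsign_bidx_setC !setC_bidx rev0 rev1 mixed_disc2_hcoef /mixed_disc2 /=.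
by field.
Qed.

Lemma csign_setT : csign R [set: idx] = 1.
Proof.
by rewrite /csign card_pairs !big_ord_recl !big_ord0 !inE !val_conj_idx /= -signr_odd /= ?expr0.
Qed.

Lemma real_form_top (a : cf) : isPQ 2 2 a -> a [set: idx] \is Num.real -> real_form a.
Proof.
move=> a22 a_real; apply/ffunP => K; rewrite conjfE.
have [->|KT] := eqVneq K [set: idx].
  by rewrite conj_imsetT csign_setT mul1r; apply: conj_Creal.
have KT' : @conj_idx 2 @: K != [set: idx].
  by apply: contra KT => /eqP KT; rewrite -(conj_imsetK K) KT conj_imsetT.
by rewrite !(isPQnn_eq0 a22) // conjc0 mulr0.
Qed.

Lemma Kahler_wedge_top_gt0 (w : cf) : Kahler w -> 0 < wedge w w [set: idx].
Proof.
move=> w_K; have [H00_gt0 H11_gt0 Hdet_gt0] : posdef2 (hcoef w).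
  by apply: posdef2_quad => [|th]; [apply: Kahler_hcoef_conj | apply: Kahler_quad_gt0].
have w11 := Kahler_isPQ11 w_K; rewrite wedge11_top // divr_gt0 ?ltr0n //.
suff -> : mixed_disc2 (hcoef w) (hcoef w)
  = 2 * (hcoef w 0 0 * hcoef w 1 1 - hcoef w 0 1 * hcoef w 1 0) by rewrite mulr_gt0 ?ltr0n.
by rewrite /mixed_disc2; ring.
Qed.

Section GriffithsDet.
Variable M : 'I_2 -> 'I_2 -> cf.
Hypothesis M11 : forall i j, isPQ 1 1 (M i j).
Hypothesis M_herm : forall i j, M i j = conjf (M j i).
Hypothesis M_pos : Griffiths_positive M.

Let N i j := hcoef (M i j).

Lemma det2_top : det2 M [set: idx] = mixed_det N / 4.
Proof. by rewrite ffunDE ffunNE !wedge11_top // /mixed_det; ring. Qed.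

Lemma hcoef_herm i j a b : N i j a b = conjc (N j i b a).
Proof.
rewrite /N /hcoef {1}M_herm conjfE conj_bidx csign_bidx; move: (M j i _) => -[x y].
by apply/eqP; rewrite eq_complex /=; apply/andP; split; apply/eqP; ring.
Qed.

Lemma Griffiths_hmx_gt0 th x : (exists i, th i != 0) -> (exists a, x a != 0) ->
  0 < \sum_i \sum_j th i * conjc (th j) * hmx N x i j.
Proof.
move=> th_neq0 x_neq0; have := Kahler_quad_gt0 (M_pos th_neq0) x_neq0.
suff -> : \sum_a \sum_b x a * conjc (x b) *
  hcoef (\sum_i \sum_j (th i * conjc (th j)) *: M i j) a b
  = \sum_i \sum_j th i * conjc (th j) * hmx N x i j by [].
under eq_bigr => a _ do under eq_bigr => b _ do rewrite hcoef_lincomb.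
by rewrite /N /hmx !sum_ord2; ring.
Qed.

Lemma det2_top_gt0 : 0 < det2 M [set: idx].
Proof.
by rewrite det2_top divr_gt0 ?ltr0n // mixed_det_gt0 //; [apply: hcoef_herm | apply: Griffiths_hmx_gt0].
Qed.

End GriffithsDet.

End Dim2.

Lemma convex_comb_gt0 (K : numDomainType) (a b s : K) :
  0 < a -> 0 < b -> 0 <= s <= 1 -> 0 < (1 - s) * a + s * b.
Proof.
move=> a_gt0 b_gt0 /andP[s_ge0 s_le1].
have [->|s_neq0] := eqVneq s 0; first by rewrite subr0 mul1r mul0r addr0.
by rewrite ltr_wpDl ?mulr_ge0 ?subr_ge0 ?(ltW a_gt0) // mulr_gt0 // lt_def s_neq0.
Qed.

Lemma segment_continuous (R : realType) (z d : R[i]) (f : R -> R[i]) :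
  (forall t, f t = z + t%:C%C * d) ->
  continuous (fun t => complex.Re (f t)) /\ continuous (fun t => complex.Im (f t)).
Proof.
case: z d => [a b] [c e] fE; split.
  rewrite (_ : (fun t => _) = fun t => a + c * t); last by apply: funext => t; rewrite fE /=; ring.
  by move=> t; apply: continuousD; [exact: cst_continuous | exact: mulrl_continuous].
rewrite (_ : (fun t => _) = fun t => b + e * t); last by apply: funext => t; rewrite fE /=; ring.
by move=> t; apply: continuousD; [exact: cst_continuous | exact: mulrl_continuous].
Qed.

Section TopDegree.
Variable R : realType.
Local Notation cf := (cform R 2).
Local Notation idx := 'I_(2 + 2).

Lemma wpow2 (w : cf) : wpow w 2 = wedge w w.
Proof. by rewrite /wpow /= wedge1r. Qed.

Lemma Hodge_Riemann_top (w Om : cf) : isPQ 2 2 Om -> isPQ 2 2 (wpow w 2) ->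
  0 < Om [set: idx] -> 0 < wpow w 2 [set: idx] -> Hodge_Riemann 2 w Om.
Proof.
move=> Om22 w22 Om_gt0 w_gt0.
pose P t : cf := Om + t%:C%C *: (wpow w 2 - Om).
have P22 t : isPQ 2 2 (P t) by apply/isPQ_add/isPQ_scale/isPQ_sub.
have PE t K : P t K = Om K + t%:C%C * (wpow w 2 K - Om K).
  by rewrite ffunDE cformZE ffunDE ffunNE.
have P_gt0 t : 0 <= t <= 1 -> 0 < P t [set: idx].
  move=> t01; rewrite PE (_ : _ + _ = (1 - t%:C%C) * Om [set: idx] + t%:C%C * wpow w 2 [set: idx]).
    by apply: convex_comb_gt0; rewrite // -(rmorph0 (real_complex R)) -(rmorph1 (real_complex R)) !lecR.
  by ring.
split => //; first exact: real_form_top (gtr0_real Om_gt0).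
move=> p q; rewrite subnn => /eqP; rewrite addn_eq0 => /andP[/eqP-> /eqP->].
exists P; split.
- by rewrite /P (rmorph0 (real_complex R)) scale0r addr0.
- by rewrite /P (rmorph1 (real_complex R)) scale1r addrC subrK.
- move=> K; have [cRe cIm] := segment_continuous (PE ^~ K).
  by split; apply: continuous_subspaceT.
- by move=> t t01; split; last exact: real_form_top (gtr0_real (P_gt0 t t01)).
- move=> t t01 r; rewrite leqn0 => /eqP->; rewrite muln0 /wpow /= wedge1r.
  exact: Lefschetz_top (P22 t) (lt0r_neq0 (P_gt0 t t01)).
Qed.

End TopDegree.

Theorem mainTheorem6 (R : realType) (M : 'I_2 -> 'I_2 -> cform R 2) :
  (forall i j, isPQ 1 1 (M i j)) ->
  (forall i j, M i j = conjf (M j i)) ->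
  Griffiths_positive M ->
  forall w : cform R 2, Kahler w -> Hodge_Riemann 2 w (det2 M).
Proof.
move=> M11 M_herm M_pos w w_K; have w11 := Kahler_isPQ11 w_K.
apply: Hodge_Riemann_top; rewrite ?wpow2.
- exact: isPQ_sub (isPQ_wedge (M11 0 0) (M11 1 1)) (isPQ_wedge (M11 0 1) (M11 1 0)).
- exact: (isPQ_wedge w11 w11).
- exact: det2_top_gt0.
- exact: Kahler_wedge_top_gt0.
Qed.
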